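(* For every $j\ge1$, $a'=1,\dots,p_1$, $b'=1,\dots,p_2$, $$\Big(\sum_{a=1}^{p_1}\frac{\partial}{\partial t_{j,a}}+\sum_{b=1}^{p_2}\frac{\partial}{\partial\bar t_{j,b}}\Big)X=0\qquad\text{for }X\in\{L_{a'},\ \bar L_{b'},\ \mathcal A_{a'},\ \bar{\mathcal A}_{b'}\}.$$
   Context: $\mu$ finite Borel measure on an interval; weights $w_{1,a}$ ($a\le p_1$), $w_{2,b}$ ($b\le p_2$); compositions $\vec n_\ell\in\mathbb N^{p_\ell}$; each $i\in\mathbb Z_+$ is uniquely $i=q|\vec n_\ell|+n_{\ell,1}+\dots+n_{\ell,a-1}+r$ ($0\le r<n_{\ell,a}$), $a_\ell(i)=a$, $k_\ell(i)=qn_{\ell,a}+r$; moment matrix $g_{i,j}=\int x^{k_1(i)+k_2(j)}w_{1,a_1(i)}w_{2,a_2(j)}d\mu$. $e_{\ell,a}(k)=e_i$ with $a_\ell(i)=a,k_\ell(i)=k$; $\Lambda_{\ell,a}=\sum_ke_{\ell,a}(k)e_{\ell,a}(k+1)^\top$; $\chi_{\ell,a}(x)=\sum_ke_{\ell,a}(k)x^k$. Real times $t=(t_{j,a},\bar t_{j,b})$; $W_0(t)=\exp(\sum_{a,j}t_{j,a}\Lambda_{1,a}^j)$, $\bar W_0(t)=\exp(\sum_{b,j}\bar t_{j,b}(\Lambda_{2,b}^\top)^j)$, $g(t)=W_0(t)g\bar W_0(t)^{-1}$ (integrals assumed convergent), assumed to factorize smoothly in $t$ as $g(t)=S(t)^{-1}\bar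 S(t)$ with $S$ unit lower triangular and $\bar S$ upper triangular invertible. $L_a=S\Lambda_{1,a}S^{-1}$, $\bar L_b=\bar S\Lambda_{2,b}^\top\bar S^{-1}$, $\mathcal A_a(x,t)=S(t)\chi_{1,a}(x)$, $\bar{\mathcal A}_b(x,t)=(\bar S(t)^{-1})^\top\chi_{2,b}(x)$ (derivatives taken at fixed $x$). *)

From HB Require Import structures.
From mathcomp Require Import all_boot all_order all_algebra.
From mathcomp Require Import all_classical all_reals all_analysis.
Set Implicit Arguments. Unset Strict Implicit. Unset Printing Implicit Defensive.
Import Order.TTheory GRing.Theory Num.Theory.
Import numFieldNormedType.Exports.
Local Open Scope ring_scope.
Local Open Scope classical_set_scope.

(* Indices i \in Z_+ are nat (0,1,2,...).  A composition is n : 'I_p -> nat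
   (component a of the paper is the ordinal a-1). *)

Definition csize p (n : 'I_p -> nat) : nat := (\sum_(b < p) n b)%N.
Definition cprefix p (n : 'I_p -> nat) (a : 'I_p) : nat :=
  (\sum_(b < p | (b < a)%N) n b)%N.
(* a(i): the unique a with i = q|n| + n_1+..+n_{a-1} + r, 0 <= r < n_a *)
Definition aidx p (n : 'I_p -> nat) (i : nat) : option 'I_p :=
  [pick a | (cprefix n a <= i %% csize n < cprefix n a + n a)%N].
(* k(i) = q n_a + r  (used with a = a(i)) *)
Definition kidx p (n : 'I_p -> nat) (i : nat) (a : 'I_p) : nat :=
  (i %/ csize n * n a + (i %% csize n - cprefix n a))%N.

Definition smx (R : Type) := nat -> nat -> R.
Definition svec (R : Type) := nat -> R.

(* Lambda_{l,a} = sum_k e_{l,a}(k) e_{l,a}(k+1)^T *)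
Definition Lam (R : pzRingType) p (n : 'I_p -> nat) (a : 'I_p) : smx R :=
  fun i i' => if (aidx n i == Some a) && (aidx n i' == Some a)
                 && (kidx n i' a == (kidx n i a).+1) then 1 else 0.

(* chi_{l,a}(x) = sum_k e_{l,a}(k) x^k *)
Definition chi (R : pzRingType) p (n : 'I_p -> nat) (a : 'I_p) (x : R) : svec R :=
  fun i => if aidx n i == Some a then x ^+ kidx n i a else 0.

Definition rsum (R : realType) (m : nat) (F : nat -> R) : R :=
  limn (fun N => \sum_(m <= k < N) F k).

Definition smul (R : realType) (A B : smx R) : smx R :=
  fun i k => rsum 0 (fun m => A i m * B m k).
Definition smulv (R : realType) (A : smx R) (v : svec R) : svec R :=
  fun i => rsum 0 (fun m => A i m * v m).
Definition strans (R : Type) (A : smx R) : smx R := fun i k => A k i.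

(* inverse of a (lower or upper) triangular semi-infinite matrix with
   invertible diagonal: its leading N x N blocks are the inverses of the
   leading N x N blocks of A *)
Definition trinv (R : realType) (A : smx R) : smx R :=
  fun i j => let N := (maxn i j).+1 in
    invmx (\matrix_(k < N, l < N) A k l) (inord i) (inord j).

(* times: t j a = t_{j,a}, tb j b = \bar t_{j,b}  (only j >= 1 are used) *)
Definition times1 (R : Type) p1 := nat -> 'I_p1 -> R.

(* integrand of g(t)_{i,l} = (W_0(t) g \bar W_0(t)^{-1})_{i,l}
   = int x^{k1(i)+k2(l)} w_{1,a1(i)} w_{2,a2(l)}
         exp(sum_j t_{j,a1(i)} x^j) exp(-sum_j \bar t_{j,a2(l)} x^j) dmu *)
Definition gintegrand (R : realType) p1 p2 (n1 : 'I_p1 -> nat) (n2 : 'I_p2 -> nat)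
  (w1 : 'I_p1 -> R -> R) (w2 : 'I_p2 -> R -> R)
  (t : times1 R p1) (tb : times1 R p2) (i l : nat) : R -> R :=
  fun x => match aidx n1 i, aidx n2 l with
  | Some a, Some b =>
      x ^+ (kidx n1 i a + kidx n2 l b) * w1 a x * w2 b x *
      (expR (rsum 1 (fun j => t j a * x ^+ j)) *
       expR (- rsum 1 (fun j => tb j b * x ^+ j)))
  | _, _ => 0
  end.

Definition gt (R : realType) (mu : {measure set R -> \bar R}) (I : interval R)
  p1 p2 (n1 : 'I_p1 -> nat) (n2 : 'I_p2 -> nat)
  (w1 : 'I_p1 -> R -> R) (w2 : 'I_p2 -> R -> R)
  (t : times1 R p1) (tb : times1 R p2) : smx R :=
  fun i l => Rintegral mu [set` I] (gintegrand n1 n2 w1 w2 t tb i l).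

Definition tshift (R : realType) p (t : times1 R p) (j : nat) (a : 'I_p) (s : R)
  : times1 R p :=
  fun j' a' => if (j' == j) && (a' == a) then t j' a' + s else t j' a'.

Definition tblock1 (R : realType) p1 p2 (t : times1 R p1) (j : nat)
  (u : 'rV[R]_(p1 + p2)) : times1 R p1 :=
  fun j' a => if j' == j then t j' a + u ord0 (lshift p2 a) else t j' a.
Definition tblock2 (R : realType) p1 p2 (tb : times1 R p2) (j : nat)
  (u : 'rV[R]_(p1 + p2)) : times1 R p2 :=
  fun j' b => if j' == j then tb j' b + u ord0 (rshift p1 b) else tb j' b.

Definition dt1 (R : realType) p1 p2 (F : times1 R p1 -> times1 R p2 -> R)
  (t : times1 R p1) (tb : times1 R p2) (j : nat) (a : 'I_p1) : R :=
  derive1 (fun s => F (tshift t j a s) tb) 0.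
Definition dt2 (R : realType) p1 p2 (F : times1 R p1 -> times1 R p2 -> R)
  (t : times1 R p1) (tb : times1 R p2) (j : nat) (b : 'I_p2) : R :=
  derive1 (fun s => F t (tshift tb j b s)) 0.

Definition diagD (R : realType) p1 p2 (F : times1 R p1 -> times1 R p2 -> R)
  (t : times1 R p1) (tb : times1 R p2) (j : nat) : R :=
  \sum_(a < p1) dt1 F t tb j a + \sum_(b < p2) dt2 F t tb j b.

Definition Lop (R : realType) p1 (n1 : 'I_p1 -> nat) (S : smx R) (a : 'I_p1) : smx R :=
  smul (smul S (Lam R n1 a)) (trinv S).
Definition Lbop (R : realType) p2 (n2 : 'I_p2 -> nat) (Sb : smx R) (b : 'I_p2) : smx R :=
  smul (smul Sb (strans (Lam R n2 b))) (trinv Sb).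
Definition Aop (R : realType) p1 (n1 : 'I_p1 -> nat) (S : smx R) (a : 'I_p1) (x : R)
  : svec R := smulv S (chi n1 a x).
Definition Abop (R : realType) p2 (n2 : 'I_p2 -> nat) (Sb : smx R) (b : 'I_p2) (x : R)
  : svec R := smulv (strans (trinv Sb)) (chi n2 b x).

(* times with only finitely many nonzero entries (so that the series
   sum_j t_{j,a} x^j in the exponent are finite sums) *)
Definition fsupp (R : realType) p (t : times1 R p) : Prop :=
  exists N : nat, forall j a, (N < j)%N -> t j a = 0.

From HB Require Import structures.
From mathcomp Require Import all_boot all_order all_algebra.
From mathcomp Require Import all_classical all_reals all_analysis.
From mathcomp Require Import zify.
Import Order.TTheory GRing.Theory Num.Theory.
Import numFieldNormedType.Exports.
Set Implicit Arguments. Unset Strict Implicit. Unset Printing Implicit Defensive.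
Local Open Scope ring_scope.

(* Shifting all the times t_{j,a} and \bar t_{j,b} of one level j >= 1 by the
   same amount s multiplies the weights of the moment matrix by
   exp(s x^j) exp(-s x^j) = 1, so g(t) is constant along that diagonal
   direction.  By uniqueness of the factorization g = S^{-1} \bar S into
   semi-infinite triangular matrices, S and \bar S are constant along it as
   well, and so are L_a, \bar L_b, A_a and \bar A_b.  Each entry of these is a
   finite rational expression in entries of S and \bar S, hence differentiable,
   so the sum of the partial derivatives is the derivative along the diagonal
   direction, which vanishes. *)

Section TriangularMatrix.
Context {F : fieldType} {n : nat} {A : 'M[F]_n}.
Hypotheses (A_trig : is_trig_mx A) (A_diag : forall i, A i i != 0).

Lemma unitmx_trig : A \in unitmx.
Proof.
rewrite unitmxE unitfE det_trig //.
by apply/prodf_neq0 => i _; exact: A_diag.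
Qed.

Lemma invmx_trig : is_trig_mx (invmx A).
Proof.
have /is_trig_mxP A_lo := A_trig.
apply/is_trig_mxP.
suff ind k : forall i j : 'I_n, i = k :> nat -> (i < j)%N -> invmx A i j = 0.
  by move=> i j; exact: ind.
elim/ltn_ind: k => k IH i j ik ij; subst k.
have := congr1 (fun M : 'M[F]_n => M i j) (mulmxV unitmx_trig).
rewrite !mxE (bigD1 i) //= big1 ?addr0 => [|m mi].
  rewrite -val_eqE /= ltn_eqF // => /eqP.
  by rewrite mulf_eq0 (negbTE (A_diag i)) => /eqP.
case: (ltngtP m i) => [mi'|im|/val_inj mi']; last by rewrite mi' eqxx in mi.
  by rewrite (IH m) ?mulr0 //; exact: ltn_trans ij.
by rewrite A_lo ?mul0r.
Qed.

Lemma invmx_trig_diag i : invmx A i i = (A i i)^-1.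
Proof.
have /is_trig_mxP A_lo := A_trig; have /is_trig_mxP Ainv_lo := invmx_trig.
have := congr1 (fun M : 'M[F]_n => M i i) (mulVmx unitmx_trig).
rewrite !mxE eqxx (bigD1 i) //= big1 ?addr0 => [|m mi].
  by move=> E; apply: (mulIf (A_diag i)); rewrite E mulVf.
case: (ltngtP m i) => [mi'|im|/val_inj mi']; last by rewrite mi' eqxx in mi.
  by rewrite A_lo ?mulr0.
by rewrite Ainv_lo ?mul0r.
Qed.
End TriangularMatrix.

Section SemiInfiniteTriangular.
Variable R : realType.

Definition lower_trig (A : smx R) := forall i j, (i < j)%N -> A i j = 0.
Definition upper_trig (A : smx R) := lower_trig (strans A).
Definition diag_nz (A : smx R) := forall i, A i i != 0.

Definition lead_mx (A : smx R) N : 'M[R]_N.+1 := \matrix_(k < N.+1, l < N.+1) A k l.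

Lemma rsum_finite (F : nat -> R) m M : (m <= M)%N ->
  (forall k, (M <= k)%N -> F k = 0) -> rsum m F = \sum_(m <= k < M) F k.
Proof.
move=> mM FM; apply: lim_near_cst => //; exists M => // N /= MN.
rewrite (big_cat_nat mM MN) /= [X in _ + X]big_nat_cond [X in _ + X]big1 ?addr0 //.
by move=> k /andP [/andP [Mk _] _]; exact: FM.
Qed.

Lemma smul_lower_upper (L B : smx R) i k : lower_trig L -> upper_trig B ->
  smul L B i k = \sum_(m < (minn i k).+1) L i m * B m k.
Proof.
move=> L_lo B_up; rewrite /smul (@rsum_finite _ 0 (minn i k).+1) ?big_mkord //.
move=> m; rewrite ltnNge leq_min negb_and -!ltnNge => /orP [im|km].
  by rewrite L_lo ?mul0r.
by rewrite [B m k]B_up ?mulr0.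
Qed.

Lemma smul_lower_left (A B : smx R) i k : lower_trig A ->
  smul A B i k = \sum_(m < i.+1) A i m * B m k.
Proof.
move=> A_lo; rewrite /smul (@rsum_finite _ 0 i.+1) ?big_mkord // => m im.
by rewrite A_lo ?mul0r.
Qed.

Lemma smul_upper_right (A B : smx R) i k : upper_trig B ->
  smul A B i k = \sum_(m < k.+1) A i m * B m k.
Proof.
move=> B_up; rewrite /smul (@rsum_finite _ 0 k.+1) ?big_mkord // => m km.
by rewrite [B m k]B_up ?mulr0.
Qed.

Lemma smulv_lower (A : smx R) (v : svec R) i : lower_trig A ->
  smulv A v i = \sum_(m < i.+1) A i m * v m.
Proof.
move=> A_lo; rewrite /smulv (@rsum_finite _ 0 i.+1) ?big_mkord // => m im.
by rewrite A_lo ?mul0r.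
Qed.

Lemma trinv_strans (A : smx R) : trinv (strans A) = strans (trinv A).
Proof.
apply/funext => i; apply/funext => j; rewrite /trinv /strans maxnC.
have -> : \matrix_(k < (maxn j i).+1, l < (maxn j i).+1) A l k
   = (\matrix_(k < (maxn j i).+1, l < (maxn j i).+1) A k l)^T.
  by apply/matrixP => k l; rewrite !mxE.
by rewrite -trmx_inv mxE.
Qed.

Section Lower.
Variable A : smx R.
Hypotheses (A_lo : lower_trig A) (A_diag : diag_nz A).

Lemma lead_mx_trig N : is_trig_mx (lead_mx A N).
Proof. by apply/is_trig_mxP => i j ij; rewrite mxE A_lo. Qed.

Lemma lead_mx_diag N (i : 'I_N.+1) : lead_mx A N i i != 0.
Proof. by rewrite mxE. Qed.

Lemma lead_mx_unit N : lead_mx A N \in unitmx.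
Proof. exact: unitmx_trig (lead_mx_trig N) (@lead_mx_diag N). Qed.

Lemma invmx_lead_mx M N i j : (M <= N)%N -> (i <= M)%N -> (j <= M)%N ->
  invmx (lead_mx A N) (inord i) (inord j) = invmx (lead_mx A M) (inord i) (inord j).
Proof.
move=> MN iM jM.
have /is_trig_mxP invN_lo := invmx_trig (lead_mx_trig N) (@lead_mx_diag N).
pose X := \matrix_(k < M.+1, l < M.+1) invmx (lead_mx A N) (inord k) (inord l).
suff XA : X *m lead_mx A M = 1%:M.
  have -> : invmx (lead_mx A M) = X.
    by rewrite -[X]mulmx1 -(mulmxV (lead_mx_unit M)) mulmxA XA mul1mx.
  by rewrite mxE !inordK.
apply/matrixP => k l.
have lt_N (m : 'I_M.+1) : (m < N.+1)%N by exact: leq_trans (ltn_ord m) _.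
have := congr1 (fun B : 'M[R]_N.+1 => B (inord k) (inord l)) (mulVmx (lead_mx_unit N)).
rewrite !mxE -val_eqE /= !inordK // => <-.
pose f m := invmx (lead_mx A N) (inord k) (inord m) * A m l.
transitivity (\sum_(m < M.+1) f m); first by apply: eq_bigr => m _; rewrite !mxE.
rewrite (big_ord_widen N.+1 f) // big_mkcond /=; apply: eq_bigr => m _.
rewrite /f !mxE inord_val (inordK (lt_N l)); case: ltnP => [//|Mm].
by rewrite invN_lo ?mul0r // (inordK (lt_N k)); exact: leq_trans (ltn_ord k) Mm.
Qed.

Lemma trinv_lead N i j : (i <= N)%N -> (j <= N)%N ->
  trinv A i j = invmx (lead_mx A N) (inord i) (inord j).
Proof.
by move=> iN jN; rewrite (@invmx_lead_mx (maxn i j)) ?geq_max ?iN ?leq_maxl ?leq_maxr.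
Qed.

Lemma lead_mx_trinv N : lead_mx (trinv A) N = invmx (lead_mx A N).
Proof.
have le_N (m : 'I_N.+1) : (m <= N)%N by rewrite -ltnS.
by apply/matrixP => k l; rewrite mxE (@trinv_lead N) ?le_N ?inord_val.
Qed.

Lemma trinv_lower : lower_trig (trinv A).
Proof.
move=> i j ij; have /is_trig_mxP := invmx_trig (lead_mx_trig (maxn i j)) (@lead_mx_diag _).
by apply; rewrite !inordK // ltnS ?leq_maxl ?leq_maxr.
Qed.

Lemma trinv_diag i : trinv A i i = (A i i)^-1.
Proof.
rewrite /trinv maxnn invmx_trig_diag ?lead_mx_trig //; last exact: lead_mx_diag.
by rewrite mxE inordK.
Qed.
End Lower.

Lemma trinv_inj (A1 A2 : smx R) : lower_trig A1 -> diag_nz A1 ->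
  lower_trig A2 -> diag_nz A2 -> trinv A1 = trinv A2 -> A1 = A2.
Proof.
move=> lo1 d1 lo2 d2 eqT; apply/funext => i; apply/funext => k.
have lead_A (A : smx R) : lower_trig A -> diag_nz A ->
    A i k = invmx (lead_mx (trinv A) (maxn i k)) (inord i) (inord k).
  by move=> lo d; rewrite lead_mx_trinv // invmxK mxE !inordK // ltnS ?leq_maxl ?leq_maxr.
by rewrite (lead_A A1) // (lead_A A2) // eqT.
Qed.
End SemiInfiniteTriangular.

Section UpperAndFactorization.
Variable R : realType.
Implicit Types (A B L : smx R).

Lemma lead_mx_strans A N : lead_mx (strans A) N = (lead_mx A N)^T.
Proof. by apply/matrixP => k l; rewrite !mxE. Qed.

Lemma lead_mx_unit_upper B N : upper_trig B -> diag_nz B -> lead_mx B N \in unitmx.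
Proof. by move=> B_up B_diag; rewrite -unitmx_tr -lead_mx_strans lead_mx_unit. Qed.

Lemma trinv_upper B : upper_trig B -> diag_nz B -> upper_trig (trinv B).
Proof. by move=> B_up B_diag; rewrite /upper_trig -trinv_strans; exact: trinv_lower. Qed.

Lemma lower_upper_uniq L1 L2 B1 B2 : lower_trig L1 -> lower_trig L2 ->
  (forall i, L1 i i = 1) -> (forall i, L2 i i = 1) ->
  upper_trig B1 -> upper_trig B2 -> diag_nz B1 ->
  smul L1 B1 = smul L2 B2 -> L1 = L2 /\ B1 = B2.
Proof.
move=> lo1 lo2 d1 d2 up1 up2 nzB eqLB.
(* Induction on min(i, k): the (i, k) entry of L B only involves entries with
   a smaller min-index besides its last term L i n * B n k. *)
suff eq_at n i k : minn i k = n -> L1 i k = L2 i k /\ B1 i k = B2 i k.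
  by split; apply/funext => i; apply/funext => k; case: (eq_at _ i k erefl).
elim/ltn_ind: n i k => n IH.
have last_term i k : minn i k = n -> L1 i n * B1 n k = L2 i n * B2 n k.
  move=> ikn; have := congr1 (fun G : smx R => G i k) eqLB.
  rewrite !smul_lower_upper // ikn !big_ord_recr /= => /eqP.
  suff -> : \sum_(m < n) L1 i m * B1 m k = \sum_(m < n) L2 i m * B2 m k.
    by rewrite (inj_eq (addrI _)) => /eqP.
  apply: eq_bigr => m _.
  have [-> _] := IH (minn i m) (leq_ltn_trans (geq_minr i m) (ltn_ord m)) i m erefl.
  by have [_ ->] := IH (minn m k) (leq_ltn_trans (geq_minl m k) (ltn_ord m)) m k erefl.
have eqB_nn : B1 n n = B2 n n by have := last_term n n (minnn n); rewrite d1 d2 !mul1r.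
move=> i k; case: (leqP i k) => [ik|ki] eq_n; subst n.
  split.
    move: ik; rewrite leq_eqVlt => /orP [/eqP <-|lt_ik]; first by rewrite d1 d2.
    by rewrite lo1 ?lo2.
  by have := last_term i k (minn_idPl ik); rewrite d1 d2 !mul1r.
split; last by rewrite [B1 i k]up1 ?[B2 i k]up2.
by apply: (mulIf (nzB k)); rewrite {2}eqB_nn; exact: last_term (minn_idPr (ltnW ki)).
Qed.

Lemma trinv_mul_uniq S1 S2 B1 B2 : lower_trig S1 -> lower_trig S2 ->
  (forall i, S1 i i = 1) -> (forall i, S2 i i = 1) ->
  upper_trig B1 -> upper_trig B2 -> diag_nz B1 ->
  smul (trinv S1) B1 = smul (trinv S2) B2 -> S1 = S2 /\ B1 = B2.
Proof.
move=> lo1 lo2 d1 d2 up1 up2 nzB eqSB.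
have nz1 : diag_nz S1 by move=> i; rewrite d1 oner_neq0.
have nz2 : diag_nz S2 by move=> i; rewrite d2 oner_neq0.
have [eqT ->] : trinv S1 = trinv S2 /\ B1 = B2.
  apply: lower_upper_uniq => //; try exact: trinv_lower.
    by move=> i; rewrite trinv_diag // d1 invr1.
  by move=> i; rewrite trinv_diag // d2 invr1.
by split=> //; exact: trinv_inj.
Qed.
End UpperAndFactorization.

Section Differentiability.
Variables (R : realType) (V : normedModType R) (x : V).

Lemma differentiable_big_sum (I : Type) (r : seq I) (P : pred I) (F : I -> V -> R) :
  (forall i, P i -> differentiable (F i) x) ->
  differentiable (fun u => \sum_(i <- r | P i) F i u) x.
Proof.
move=> dF; rewrite -fct_sumE; elim/big_ind: _ => [|f g df dg|i /dF //].
  exact: differentiable_cst.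
exact: differentiableD.
Qed.

Lemma differentiable_big_prod (I : Type) (r : seq I) (P : pred I) (F : I -> V -> R) :
  (forall i, P i -> differentiable (F i) x) ->
  differentiable (fun u => \prod_(i <- r | P i) F i u) x.
Proof.
move=> dF; rewrite -fct_prodE; elim/big_ind: _ => [|f g df dg|i /dF //].
  exact: differentiable_cst.
exact: differentiableM.
Qed.

Lemma differentiable_mul (f g : V -> R) : differentiable f x -> differentiable g x ->
  differentiable (fun u => f u * g u) x.
Proof. exact: differentiableM. Qed.

Lemma differentiable_det n (A : V -> 'M[R]_n) :
  (forall i j, differentiable (fun u => A u i j) x) ->
  differentiable (fun u => \det (A u)) x.
Proof.
move=> dA; apply: differentiable_big_sum => s _.
apply: differentiable_mul; first exact: differentiable_cst.
by apply: differentiable_big_prod => i _; exact: dA.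
Qed.

Lemma differentiable_invmx n (A : V -> 'M[R]_n) : (forall u, A u \in unitmx) ->
  (forall i j, differentiable (fun u => A u i j) x) ->
  forall i j, differentiable (fun u => invmx (A u) i j) x.
Proof.
move=> unitA dA i j.
have -> : (fun u => invmx (A u) i j) = (fun u =>
    (\det (A u))^-1 * ((-1) ^+ (j + i) * \det (row' j (col' i (A u))))).
  by apply/funext => u; rewrite /invmx unitA !mxE.
apply: differentiable_mul.
  by apply: differentiableV; [exact: differentiable_det | rewrite -unitfE -unitmxE].
apply: differentiable_mul; first exact: differentiable_cst.
by apply: differentiable_det => k l; under eq_fun do rewrite !mxE; exact: dA.
Qed.

Lemma differentiable_trinv (U : V -> smx R) : (forall u N, lead_mx (U u) N \in unitmx) ->
  (forall i k, differentiable (fun u => U u i k) x) ->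
  forall i k, differentiable (fun u => trinv (U u) i k) x.
Proof.
move=> unitU dU i k; apply: (@differentiable_invmx _ (fun u => lead_mx (U u) _)) => // k' l'.
by under eq_fun do rewrite mxE; exact: dU.
Qed.
End Differentiability.

Section CompositionMatrices.
Variable R : realType.

Lemma csize_ge p (n : 'I_p -> nat) a : (n a <= csize n)%N.
Proof. by rewrite /csize (bigD1 a) //= leq_addr. Qed.

Lemma kidx_le p (n : 'I_p -> nat) i a : (kidx n i a <= i)%N.
Proof.
rewrite /kidx [X in (_ <= X)%N](divn_eq i (csize n)) leq_add ?leq_subr //.
by rewrite leq_mul2l csize_ge orbT.
Qed.

Lemma kidx_ge p (n : 'I_p -> nat) i a : (0 < n a)%N -> (i %/ csize n <= kidx n i a)%N.
Proof.
move=> na; rewrite /kidx; apply: leq_trans (leq_addr _ _).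
by rewrite -{1}[(i %/ _)%N]muln1 leq_mul2l na orbT.
Qed.

Lemma Lam_eq0 p (n : 'I_p -> nat) a m' m : (0 < n a)%N ->
  (m'.+2 * csize n <= m)%N -> Lam R n a m' m = 0.
Proof.
move=> na hm; rewrite /Lam; case: ifP => // /andP [_ /eqP k_succ].
have csize_gt0 : (0 < csize n)%N by exact: leq_trans na (csize_ge n a).
have := kidx_le n m' a; have := kidx_ge m na.
have : (m'.+2 <= m %/ csize n)%N by rewrite leq_divRL.
by rewrite k_succ; lia.
Qed.

Implicit Types (A B : smx R).

Lemma LopE p (n : 'I_p -> nat) A a i k : (0 < n a)%N -> lower_trig A ->
  Lop n A a i k = \sum_(m < i.+2 * csize n)
    (\sum_(m' < i.+1) A i m' * Lam R n a m' m) * trinv A m k.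
Proof.
move=> na A_lo; rewrite /Lop {1}/smul (@rsum_finite _ _ 0 (i.+2 * csize n)) ?big_mkord //.
  by apply: eq_bigr => m _; rewrite smul_lower_left.
move=> m im; rewrite smul_lower_left // big1 ?mul0r // => m' _.
rewrite Lam_eq0 ?mulr0 //; apply: leq_trans im.
by rewrite leq_mul2r ltnS (ltn_ord m') orbT.
Qed.

Lemma LbopE p (n : 'I_p -> nat) B b i k : (0 < n b)%N -> upper_trig B -> diag_nz B ->
  Lbop n B b i k = \sum_(m < k.+1)
    (\sum_(m' < m.+2 * csize n) B i m' * Lam R n b m m') * trinv B m k.
Proof.
move=> nb B_up B_diag; rewrite /Lbop smul_upper_right; last exact: trinv_upper.
apply: eq_bigr => m _; congr (_ * _).
rewrite /smul (@rsum_finite _ _ 0 (m.+2 * csize n)) ?big_mkord // => m' hm'.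
by rewrite /strans Lam_eq0 ?mulr0.
Qed.

Lemma AopE p (n : 'I_p -> nat) A a x i : lower_trig A ->
  Aop n A a x i = \sum_(m < i.+1) A i m * chi n a x m.
Proof. exact: smulv_lower. Qed.

Lemma AbopE p (n : 'I_p -> nat) B b x i : upper_trig B -> diag_nz B ->
  Abop n B b x i = \sum_(m < i.+1) trinv B m i * chi n b x m.
Proof. by move=> B_up B_diag; rewrite /Abop smulv_lower //; exact: trinv_upper. Qed.
End CompositionMatrices.

Section OperatorDifferentiability.
Variables (R : realType) (V : normedModType R) (x : V) (U : V -> smx R).
Hypotheses (dU : forall i k, differentiable (fun u => U u i k) x)
  (U_diag : forall u, diag_nz (U u)).

Section LowerPath.
Hypothesis U_lo : forall u, lower_trig (U u).

Lemma differentiable_Lop p (n : 'I_p -> nat) a i k : (0 < n a)%N ->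
  differentiable (fun u => Lop n (U u) a i k) x.
Proof.
move=> na; under eq_fun do rewrite LopE //.
apply: differentiable_big_sum => m _; apply: differentiable_mul.
  apply: differentiable_big_sum => m' _.
  by apply: differentiable_mul; [exact: dU | exact: differentiable_cst].
by apply: differentiable_trinv => // u N; exact: lead_mx_unit.
Qed.

Lemma differentiable_Aop p (n : 'I_p -> nat) a y i :
  differentiable (fun u => Aop n (U u) a y i) x.
Proof.
under eq_fun do rewrite AopE //.
apply: differentiable_big_sum => m _.
by apply: differentiable_mul; [exact: dU | exact: differentiable_cst].
Qed.
End LowerPath.

Section UpperPath.
Hypothesis U_up : forall u, upper_trig (U u).

Let dtrinv : forall i k, differentiable (fun u => trinv (U u) i k) x.
Proof. by apply: differentiable_trinv => // u N; exact: lead_mx_unit_upper. Qed.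

Lemma differentiable_Lbop p (n : 'I_p -> nat) b i k : (0 < n b)%N ->
  differentiable (fun u => Lbop n (U u) b i k) x.
Proof.
move=> nb; under eq_fun do rewrite LbopE //.
apply: differentiable_big_sum => m _; apply: differentiable_mul; last exact: dtrinv.
apply: differentiable_big_sum => m' _.
by apply: differentiable_mul; [exact: dU | exact: differentiable_cst].
Qed.

Lemma differentiable_Abop p (n : 'I_p -> nat) b y i :
  differentiable (fun u => Abop n (U u) b y i) x.
Proof.
under eq_fun do rewrite AbopE //.
apply: differentiable_big_sum => m _.
by apply: differentiable_mul; [exact: dtrinv | exact: differentiable_cst].
Qed.
End UpperPath.
End OperatorDifferentiability.

Section DirectionalDerivatives.
Variable R : realType.

Lemma sum_delta_row n : \sum_(c < n) (delta_mx 0 c : 'rV[R]_n) = const_mx 1.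
Proof.
apply/matrixP => i c; rewrite summxE !mxE (bigD1 c) //= big1 ?addr0.
  by rewrite !mxE ord1 !eqxx.
by move=> c' /negbTE c'c; rewrite !mxE [c == _]eq_sym c'c andbF.
Qed.

Variables (V W : normedModType R).

Lemma derive1_scale (G : V -> W) (v : V) :
  derive1 (fun s => G (s *: v)) 0 = 'D_v G 0.
Proof.
rewrite /derive1 /derive /=.
suff -> : (fun h : R => h^-1 *: (G ((h + 0) *: v) - G (0 *: v)))
  = (fun h => h^-1 *: (G (h *: v + 0) - G 0)) by [].
by apply/funext => h; rewrite !addr0 scale0r.
Qed.

Lemma derive_invariant (G : V -> W) (x v : V) :
  (forall s : R, G (s *: v + x) = G x) -> 'D_v G x = 0.
Proof.
move=> G_inv; rewrite /derive; apply: lim_near_cst => //; near=> h.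
by rewrite /= G_inv subrr scaler0.
Unshelve. all: by end_near.
Qed.
End DirectionalDerivatives.

Section TimeShifts.
Variables (R : realType) (p1 p2 : nat).
Implicit Types (t : times1 R p1) (tb : times1 R p2) (u : 'rV[R]_(p1 + p2)).

Lemma tblock1_id t j u : (forall a, u ord0 (lshift p2 a) = 0) -> tblock1 t j u = t.
Proof.
by move=> u0; apply/funext => j'; apply/funext => a; rewrite /tblock1 u0 addr0; case: ifP.
Qed.

Lemma tblock2_id tb j u : (forall b, u ord0 (rshift p1 b) = 0) -> tblock2 tb j u = tb.
Proof.
by move=> u0; apply/funext => j'; apply/funext => b; rewrite /tblock2 u0 addr0; case: ifP.
Qed.

Lemma tblock1_delta t j a s : tblock1 t j (s *: delta_mx 0 (lshift p2 a)) = tshift t j a s.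
Proof.
apply/funext => j'; apply/funext => a'; rewrite /tblock1 /tshift !mxE eq_shift eqxx /=.
by case: (j' == j); case: (a' == a); rewrite /= ?mulr1 ?mulr0 ?addr0.
Qed.

Lemma tblock2_delta tb j b s : tblock2 tb j (s *: delta_mx 0 (rshift p1 b)) = tshift tb j b s.
Proof.
apply/funext => j'; apply/funext => b'; rewrite /tblock2 /tshift !mxE eq_shift eqxx /=.
by case: (j' == j); case: (b' == b); rewrite /= ?mulr1 ?mulr0 ?addr0.
Qed.

Lemma fsupp_tblock1 t j u : fsupp t -> fsupp (tblock1 t j u).
Proof.
move=> [N tN]; exists (maxn N j) => j' a; rewrite gtn_max => /andP [Nj' jj'].
by rewrite /tblock1 (gtn_eqF jj') tN.
Qed.

Lemma fsupp_tblock2 tb j u : fsupp tb -> fsupp (tblock2 tb j u).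
Proof.
move=> [N tN]; exists (maxn N j) => j' b; rewrite gtn_max => /andP [Nj' jj'].
by rewrite /tblock2 (gtn_eqF jj') tN.
Qed.

(* The diagonal operator is the derivative along the all-ones direction of the
   j-th block of times. *)
Lemma diagD_eq0 (F : times1 R p1 -> times1 R p2 -> R) t tb j :
  differentiable (fun u => F (tblock1 t j u) (tblock2 tb j u)) 0 ->
  (forall s : R, let u := s *: (const_mx 1 : 'rV[R]_(p1 + p2)) in
     F (tblock1 t j u) (tblock2 tb j u) = F t tb) ->
  diagD F t tb j = 0.
Proof.
set G := fun u => F (tblock1 t j u) (tblock2 tb j u) => dG G_inv.
have dt1E a : dt1 F t tb j a = 'd G 0 (delta_mx 0 (lshift p2 a)).
  rewrite -deriveE // -derive1_scale /dt1 /G; congr derive1; apply/funext => s.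
  by rewrite tblock1_delta tblock2_id // => b; rewrite !mxE eq_shift mulr0.
have dt2E b : dt2 F t tb j b = 'd G 0 (delta_mx 0 (rshift p1 b)).
  rewrite -deriveE // -derive1_scale /dt2 /G; congr derive1; apply/funext => s.
  by rewrite tblock2_delta tblock1_id // => a; rewrite !mxE eq_shift mulr0.
rewrite /diagD (eq_bigr _ (fun a _ => dt1E a)) (eq_bigr _ (fun b _ => dt2E b)).
rewrite -!linear_sum -linearD.
rewrite -(big_split_ord _ xpredT (fun c => delta_mx 0 c)) sum_delta_row -deriveE //.
apply: derive_invariant => s; rewrite addr0 /G G_inv.
by rewrite tblock1_id ?tblock2_id // => c; rewrite mxE.
Qed.
End TimeShifts.

Section MomentInvariance.
Variable R : realType.

Lemma rsum_shift_coef (f : nat -> R) (x c : R) N j : (1 <= j)%N ->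
  (forall k, (N < k)%N -> f k = 0) ->
  rsum 1 (fun k => (if k == j then f k + c else f k) * x ^+ k)
  = rsum 1 (fun k => f k * x ^+ k) + c * x ^+ j.
Proof.
move=> j1 f0; have N1 : (1 <= (maxn N j).+1)%N by [].
have f_eq0 k : (maxn N j < k)%N -> f k = 0 /\ (k == j) = false.
  by rewrite gtn_max => /andP [/f0 -> /gtn_eqF].
rewrite !(@rsum_finite _ _ 1 (maxn N j).+1) //; last 2 first.
- by move=> k /f_eq0 [-> _]; rewrite mul0r.
- by move=> k /f_eq0 [-> ->]; rewrite mul0r.
rewrite [X in X = _](_ : _ = \sum_(1 <= k < (maxn N j).+1)
    (f k * x ^+ k + (if k == j then c * x ^+ k else 0))); last first.
  by apply: eq_bigr => k _; case: ifP; rewrite ?addr0 // mulrDl.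
rewrite big_split /=; congr (_ + _).
rewrite (bigD1_seq j) ?iota_uniq ?mem_index_iota ?j1 ?ltnS ?leq_maxr //= eqxx.
by rewrite big1 ?addr0 // => k /negbTE ->.
Qed.

Variables (p1 p2 : nat).
Implicit Types (t : times1 R p1) (tb : times1 R p2).

Lemma rsum_tblock1 t j (s x : R) a : (1 <= j)%N -> fsupp t ->
  rsum 1 (fun k => tblock1 t j (s *: (const_mx 1 : 'rV[R]_(p1 + p2))) k a * x ^+ k)
  = rsum 1 (fun k => t k a * x ^+ k) + s * x ^+ j.
Proof.
move=> j1 [N tN]; rewrite -(@rsum_shift_coef (t^~ a) x s N) // => [|k /tN //].
by congr rsum; apply/funext => k; rewrite /tblock1 !mxE mulr1.
Qed.

Lemma rsum_tblock2 tb j (s x : R) b : (1 <= j)%N -> fsupp tb ->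
  rsum 1 (fun k => tblock2 tb j (s *: (const_mx 1 : 'rV[R]_(p1 + p2))) k b * x ^+ k)
  = rsum 1 (fun k => tb k b * x ^+ k) + s * x ^+ j.
Proof.
move=> j1 [N tN]; rewrite -(@rsum_shift_coef (tb^~ b) x s N) // => [|k /tN //].
by congr rsum; apply/funext => k; rewrite /tblock2 !mxE mulr1.
Qed.

(* exp(s x^j) from W_0 cancels against exp(-s x^j) from \bar W_0^{-1}. *)
Lemma gt_tblock_const (mu : {measure set R -> \bar R}) (I : interval R)
    (n1 : 'I_p1 -> nat) (n2 : 'I_p2 -> nat) w1 w2 t tb j (s : R) :
  (1 <= j)%N -> fsupp t -> fsupp tb ->
  let u := s *: (const_mx 1 : 'rV[R]_(p1 + p2)) in
  gt mu I n1 n2 w1 w2 (tblock1 t j u) (tblock2 tb j u) = gt mu I n1 n2 w1 w2 t tb.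
Proof.
move=> j1 ft ftb /=; apply/funext => i; apply/funext => l.
congr Rintegral; apply/funext => x; rewrite /gintegrand.
case: (aidx n1 i) => [a|] //; case: (aidx n2 l) => [b|] //.
rewrite rsum_tblock1 // rsum_tblock2 //; congr (_ * _).
by rewrite opprD !expRD mulrACA -[X in _ * X]expRD subrr expR0 mulr1.
Qed.
End MomentInvariance.

Local Open Scope classical_set_scope.

Theorem proposition3p10 (R : realType)
  (mu : {finite_measure set R -> \bar R}) (I : interval R)
  (p1 p2 : nat) (hp1 : (0 < p1)%N) (hp2 : (0 < p2)%N)
  (w1 : 'I_p1 -> R -> R) (w2 : 'I_p2 -> R -> R)
  (n1 : 'I_p1 -> nat) (n2 : 'I_p2 -> nat)
  (hn1 : forall a, (0 < n1 a)%N) (hn2 : forall b, (0 < n2 b)%N)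
  (* integrals defining g(t) are convergent *)
  (hint : forall (t : times1 R p1) (tb : times1 R p2), fsupp t -> fsupp tb -> forall (i l : nat),
     mu.-integrable [set` I] (fun x => (gintegrand n1 n2 w1 w2 t tb i l x)%:E))
  (S Sb : times1 R p1 -> times1 R p2 -> smx R)
  (* S unit lower triangular, Sb upper triangular invertible *)
  (hS1 : forall t tb, fsupp t -> fsupp tb -> forall i, S t tb i i = 1)
  (hS0 : forall t tb, fsupp t -> fsupp tb -> forall i k, (i < k)%N -> S t tb i k = 0)
  (hSb1 : forall t tb, fsupp t -> fsupp tb -> forall i, Sb t tb i i != 0)
  (hSb0 : forall t tb, fsupp t -> fsupp tb -> forall i k, (k < i)%N -> Sb t tb i k = 0)
  (* g(t) = S(t)^{-1} \bar S(t) *)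
  (hfact : forall t tb, fsupp t -> fsupp tb -> gt mu I n1 n2 w1 w2 t tb = smul (trinv (S t tb)) (Sb t tb))
  (* smoothness of the factorization in t *)
  (hsmS : forall t tb, fsupp t -> fsupp tb -> forall j i k,
     differentiable (fun u : 'rV[R]_(p1 + p2) =>
       S (tblock1 t j u) (tblock2 tb j u) i k) 0)
  (hsmSb : forall t tb, fsupp t -> fsupp tb -> forall j i k,
     differentiable (fun u : 'rV[R]_(p1 + p2) =>
       Sb (tblock1 t j u) (tblock2 tb j u) i k) 0) :
  forall (j : nat), (1 <= j)%N -> forall (a' : 'I_p1) (b' : 'I_p2),
  forall (t : times1 R p1) (tb : times1 R p2), fsupp t -> fsupp tb ->
    (forall i k, diagD (fun t tb => Lop n1 (S t tb) a' i k) t tb j = 0) /\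
    (forall i k, diagD (fun t tb => Lbop n2 (Sb t tb) b' i k) t tb j = 0) /\
    (forall (x : R) i, diagD (fun t tb => Aop n1 (S t tb) a' x i) t tb j = 0) /\
    (forall (x : R) i, diagD (fun t tb => Abop n2 (Sb t tb) b' x i) t tb j = 0).
Proof.
move=> j j1 a' b' t tb ft ftb.
have fs1 (u : 'rV[R]_(p1 + p2)) : fsupp (tblock1 t j u) by exact: fsupp_tblock1.
have fs2 (u : 'rV[R]_(p1 + p2)) : fsupp (tblock2 tb j u) by exact: fsupp_tblock2.
have S_lo u : lower_trig (S (tblock1 t j u) (tblock2 tb j u)) by exact: hS0.
have S_diag u : diag_nz (S (tblock1 t j u) (tblock2 tb j u)).
  by move=> i; rewrite hS1 ?oner_neq0.
have Sb_up u : upper_trig (Sb (tblock1 t j u) (tblock2 tb j u)).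
  by move=> i k ik; exact: hSb0.
have Sb_diag u : diag_nz (Sb (tblock1 t j u) (tblock2 tb j u)) by exact: hSb1.
have factor_inv (s : R) : let u := s *: (const_mx 1 : 'rV[R]_(p1 + p2)) in
    S (tblock1 t j u) (tblock2 tb j u) = S t tb /\
    Sb (tblock1 t j u) (tblock2 tb j u) = Sb t tb.
  move=> u; apply: trinv_mul_uniq; rewrite -?hfact ?gt_tblock_const //.
  - exact: hS0.
  - exact: hS1.
  - exact: hS1.
  - by move=> i k; exact: hSb0.
split; [|split; [|split]] => [i k|i k|y i|y i]; apply: diagD_eq0;
  try by move=> s; rewrite /= ?(factor_inv s).1 ?(factor_inv s).2.
- by apply: differentiable_Lop => // i' k'; exact: hsmS.
- by apply: differentiable_Lbop => // i' k'; exact: hsmSb.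
- by apply: differentiable_Aop => // i' k'; exact: hsmS.
- by apply: differentiable_Abop => // i' k'; exact: hsmSb.
Qed.
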